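(* Assume $\rho_\alpha^{\mathrm{dir}}<1$, let $\theta^\star$ be the unique projected Bellman fixed point, and let $x_k:=\theta_k-\theta^\star$. Then for each $k\ge0$ there exists an $\mathcal F_k$-measurable stochastic policy $\mu_k$ such that \[ x_{k+1}=A_{\mu_k}x_k+\alpha w_k\quad\text{for all }k\ge0, \] where $w_k:=\widehat g_k(\theta_k)-g(\theta_k)$ satisfies $\mathbb E[w_k\mid\mathcal F_k]=0$.
   Context: Consider a finite discounted MDP with state space $\mathcal S=\{1,\dots,|\mathcal S|\}$, action space $\mathcal A=\{1,\dots,|\mathcal A|\}$, transition probabilities $P(s'\mid s,a)$, real rewards $r(s,a,s')$, expected reward $R(s,a)=\sum_{s'}P(s'\mid s,a)r(s,a,s')$, and discount factor $\gamma\in(0,1)$. State-action vectors are ordered as $(1,1),(2,1),\dots,(|\mathcal S|,1),(1,2),\dots$. The matrix $P\in\mathbb R^{|\mathcal S||\mathcal A|\times|\mathcal S|}$ has rows $P(\cdot\mid s,a)$, and $R$ has entries $R(s,a)$. A stochastic policy is a map $\mu:\mathcal S\to\Delta_{|\mathcal A|}$. The matrix $\Pi^\mu\in\mathbb R^{|\mathcal S|\times|\mathcal S||\mathcal A|}$ has entry $\mu(a\mid s)$ at row $s$, column $(s,a)$, and zeros elsewhere. The set $\Theta$ is the set of deterministic stationary policies, viewed as stochastic policies. The feature matrix $\Phi\in\mathbb R^{|\mathcal S||\mathcal A|\times m}$ has full column rank and rows $\phi(s,a)^\top$. Define $V_\theta(s):=\max_a\phi(s,a)^\top\theta$. The distribution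 $d$ on $\mathcal S\times\mathcal A$ satisfies $d>0$ everywhere, and $D=\mathrm{diag}(d)$. The step size is $\alpha\in(0,1)$. Define $g(\theta):=\Phi^\top D(R+\gamma PV_\theta-\Phi\theta)$. A projected Bellman fixed point is a $\theta^\star$ with $g(\theta^\star)=0$. Define $A_\mu:=I-\alpha\Phi^\top D\Phi+\alpha\gamma\Phi^\top DP\Pi^\mu\Phi$. Let $\rho_\alpha^{\mathrm{dir}}:=\lim_k\max_{\pi_i\in\Theta}\|A_{\pi_k}\cdots A_{\pi_1}\|^{1/k}$ be the joint spectral radius of $\{A_\pi:\pi\in\Theta\}$. When $\rho_\alpha^{\mathrm{dir}}<1$ a unique projected Bellman fixed point exists. i.i.d. sampling: $\theta_0$ is deterministic. At each time $k$, $(s_k,a_k)$ is drawn independently according to $d$, then $s'_k\sim P(\cdot\mid s_k,a_k)$, and $r_{k+1}:=r(s_k,a_k,s'_k)$. The filtration is $\mathcal F_0=\sigma(\theta_0)$ and $\mathcal F_k=\sigma(\theta_0,\{(s_t,a_t,s'_t,r_{t+1}):t\le k-1\})$. Define \[ \widehat g_k(\theta):=\phi(s_k,a_k)\Big(r_{k+1}+\gamma\max_u\phi(s'_k,u)^\top\theta-\phi(s_k,a_k)^\top\theta\Big), \] and the update $\theta_{k+1}=\theta_k+\alpha\widehat g_k(\theta_k)$. *)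

From HB Require Import structures.
From mathcomp Require Import all_boot all_order all_algebra.
From mathcomp Require Import all_classical all_reals all_analysis.
Set Implicit Arguments. Unset Strict Implicit. Unset Printing Implicit Defensive.
Import Order.TTheory GRing.Theory Num.Theory.
Import numFieldNormedType.Exports.
Local Open Scope classical_set_scope.
Local Open Scope ring_scope.

Section QLearning.
Variables (R : realType) (nS nA m : nat).

(* index of the state-action pair (s,a) in the ordering
   (1,1),(2,1),...,(|S|,1),(1,2),... : a * |S| + s *)
Definition sa_idx (s : 'I_nS) (a : 'I_nA) : 'I_(nA * nS) := mxvec_index a s.

Definition sa_col (f : 'I_nS -> 'I_nA -> R) : 'cV[R]_(nA * nS) :=
  (mxvec (\matrix_(a < nA, s < nS) f s a))^T.

Definition fmax (T : finType) (f : T -> R) : R :=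
  match [pick i : T] with
  | Some i0 => \big[Num.max/f i0]_(i : T) f i
  | None => 0
  end.

Definition is_stoch_policy (mu : 'I_nS -> 'I_nA -> R) : Prop :=
  (forall s a, 0 <= mu s a) /\ (forall s, \sum_(a < nA) mu s a = 1).

Definition det_policy (pi : {ffun 'I_nS -> 'I_nA}) : 'I_nS -> 'I_nA -> R :=
  fun s a => if a == pi s then 1 else 0.

Variables (Pt : 'I_nS -> 'I_nA -> 'I_nS -> R) (r : 'I_nS -> 'I_nA -> 'I_nS -> R)
  (gamma alpha : R) (Phi : 'M[R]_(nA * nS, m)) (d : 'I_nS -> 'I_nA -> R).

Definition Pmat : 'M[R]_(nA * nS, nS) :=
  \matrix_(i, s') (sa_col (fun s a => Pt s a s')) i 0.

Definition Rexp (s : 'I_nS) (a : 'I_nA) : R := \sum_(s' < nS) Pt s a s' * r s a s'.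
Definition Rvec : 'cV[R]_(nA * nS) := sa_col Rexp.

Definition Dmat : 'M[R]_(nA * nS) := diag_mx (sa_col d)^T.

(* Pi^mu : entry mu(a|s) at row s, column (s,a) *)
Definition Pimat (mu : 'I_nS -> 'I_nA -> R) : 'M[R]_(nS, nA * nS) :=
  \matrix_(s, i) (sa_col (fun s2 a => if s2 == s then mu s a else 0)) i 0.

Definition phi (s : 'I_nS) (a : 'I_nA) : 'cV[R]_m := (row (sa_idx s a) Phi)^T.

Definition qval (theta : 'cV[R]_m) (s : 'I_nS) (a : 'I_nA) : R :=
  (row (sa_idx s a) Phi *m theta) 0 0.

Definition Vth (theta : 'cV[R]_m) (s : 'I_nS) : R := fmax (qval theta s).
Definition Vvec (theta : 'cV[R]_m) : 'cV[R]_nS := \col_s Vth theta s.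

Definition gfun (theta : 'cV[R]_m) : 'cV[R]_m :=
  Phi^T *m Dmat *m (Rvec + gamma *: (Pmat *m Vvec theta) - Phi *m theta).

Definition Amat (mu : 'I_nS -> 'I_nA -> R) : 'M[R]_m :=
  1%:M - alpha *: (Phi^T *m Dmat *m Phi)
       + (alpha * gamma) *: (Phi^T *m Dmat *m Pmat *m Pimat mu *m Phi).

(* joint spectral radius of {A_pi : pi in Theta} (with the max-entry matrix
   norm; the value of the limit does not depend on the norm) *)
Definition jsr : R :=
  limn (fun k : nat =>
    (\big[Num.max/0]_(ps : {ffun 'I_k -> {ffun 'I_nS -> 'I_nA}})
        `| \prod_(i < k) Amat (det_policy (ps (rev_ord i))) | ) `^ (k%:R^-1)).

Definition ghat (s : 'I_nS) (a : 'I_nA) (s' : 'I_nS) (theta : 'cV[R]_m) : 'cV[R]_m :=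
  (r s a s' + gamma * Vth theta s' - qval theta s a) *: phi s a.

End QLearning.

Section Process.
Variables (R : realType) (nS nA m : nat) (Omega : Type)
  (Pt : 'I_nS -> 'I_nA -> 'I_nS -> R) (r : 'I_nS -> 'I_nA -> 'I_nS -> R)
  (gamma alpha : R) (Phi : 'M[R]_(nA * nS, m))
  (theta0 : 'cV[R]_m)
  (st : nat -> Omega -> 'I_nS) (at_ : nat -> Omega -> 'I_nA)
  (st' : nat -> Omega -> 'I_nS).

Fixpoint theta (k : nat) (w : Omega) : 'cV[R]_m :=
  match k with
  | 0 => theta0
  | k'.+1 => theta k' w
             + alpha *: ghat r gamma Phi (st k' w) (at_ k' w) (st' k' w) (theta k' w)
  end.

Definition hist (k : nat) (w : Omega) : {ffun 'I_k -> 'I_nS * 'I_nA * 'I_nS} :=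
  [ffun t : 'I_k => (st t w, at_ t w, st' t w)].

(* F_k = sigma(theta_0, (s_t,a_t,s'_t,r_{t+1})_{t<=k-1}); theta_0 is deterministic
   and r_{t+1} is a function of (s_t,a_t,s'_t), so F_k is the sigma-algebra
   generated by the finite-valued random variable hist k *)
Definition inF (k : nat) (A : set Omega) : Prop :=
  exists B : set {ffun 'I_k -> 'I_nS * 'I_nA * 'I_nS},
    A = [set w | B (hist k w)].

Definition F_measurable (k : nat) (f : Omega -> R) : Prop :=
  forall B : set R, measurable B -> inF k (f @^-1` B).

End Process.

From HB Require Import structures.
From mathcomp Require Import all_boot all_order all_algebra.
From mathcomp Require Import all_classical all_reals all_analysis.
Import Order.TTheory GRing.Theory Num.Theory.
Import numFieldNormedType.Exports.
Local Open Scope classical_set_scope.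
Local Open Scope ring_scope.
From mathcomp Require Import ring lra.
Set Implicit Arguments. Unset Strict Implicit. Unset Printing Implicit Defensive.

(* For every state s, max_a q(s,a) - max_a q'(s,a), with q = Phi theta and q' = Phi theta_star,
   lies between the increments of q - q' at the maximisers of q' and of q, so it is a convex
   combination of these two increments.  This yields a stochastic policy mu with
   V_theta - V_theta_star = Pi^mu Phi (theta - theta_star), and since g(theta_star) = 0 the
   increment theta - theta_star + alpha g(theta) equals A_mu (theta - theta_star).
   Iterating, theta_k and the policy mu_k chosen at theta_k are functions of the history of the
   first k samples, hence F_k-measurable.  The noise w_k is a function of that history and of the
   fresh sample (s_k, a_k, s'_k), which is independent of it with law d(s,a) P(s'|s,a); averaging
   hat g over that law gives g, so w_k integrates to 0 over every event of F_k. *)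

Lemma sumr_delta (R : pzSemiRingType) (T : finType) (a0 : T) (F : T -> R) :
  \sum_a (a == a0)%:R * F a = F a0.
Proof.
rewrite (eq_bigr (fun a => if a == a0 then F a else 0)) => [|a _].
  by rewrite -big_mkcond big_pred1_eq.
by case: eqP; rewrite ?mul1r ?mul0r.
Qed.

Lemma convex_comb_between (R : realFieldType) (x v y : R) : x <= v <= y ->
  exists2 l, 0 <= l <= 1 & v = l * y + (1 - l) * x.
Proof.
move=> /andP[xv vy]; have [xy|xy] := eqVneq x y.
  by exists 1; [rewrite ler01 lexx | apply/eqP; rewrite eq_le; lra].
have yx_gt0 : 0 < y - x by rewrite subr_gt0 lt_neqAle xy (le_trans xv vy).
exists ((v - x) / (y - x)); last by field; rewrite gt_eqF.
by rewrite divr_ge0 ?subr_ge0 ?(le_trans xv vy) //= ler_pdivrMr // mul1r; lra.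
Qed.

Lemma sum_triple (V : nmodType) (I J K : finType) (F : I * J * K -> V) :
  \sum_x F x = \sum_i \sum_j \sum_k F (i, j, k).
Proof.
rewrite pair_big /= (eq_bigr (fun ij => \sum_k F (ij.1, ij.2, k))) => [|[i j] _] //.
by rewrite pair_big; apply: eq_bigr => -[[i j] k].
Qed.

Lemma ord_gt0_of_sum_neq0 (V : nmodType) n (F : 'I_n -> V) : \sum_i F i != 0 -> (0 < n)%N.
Proof. by case: n F => // F; rewrite big_ord0 eqxx. Qed.

Section MaxDifference.
Variable R : realType.

Lemma fmax_argmax (T : finType) (f : T -> R) (i0 : T) :
  exists2 a, fmax f = f a & forall b, f b <= f a.
Proof.
have [a _ fa_max] := @arg_maxP _ _ _ i0 xpredT f isT.
exists a => [|b]; last exact: fa_max.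
rewrite /fmax; case: pickP => [i1 _|/(_ i0)//].
apply/le_anti; rewrite le_bigmax andbT.
by apply/bigmax_leP; split => [|i _]; apply: fa_max.
Qed.

Lemma fmax_subr_convex (T : finType) (f g : T -> R) (i0 : T) :
  exists p : T -> R, [/\ forall a, 0 <= p a, \sum_a p a = 1 &
    fmax f - fmax g = \sum_a p a * (f a - g a)].
Proof.
have [a1 -> f_le] := fmax_argmax f i0; have [a2 -> g_le] := fmax_argmax g i0.
have [|l /andP[l0 l1] ->] := @convex_comb_between _ (f a2 - g a2) (f a1 - g a2) (f a1 - g a1).
  by have := f_le a2; have := g_le a1; lra.
pose p a := l * (a == a1)%:R + (1 - l) * (a == a2)%:R.
have sum_p (F : T -> R) : \sum_a p a * F a = l * F a1 + (1 - l) * F a2.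
  under eq_bigr do rewrite mulrDl -!mulrA.
  by rewrite big_split /= -!mulr_sumr !sumr_delta.
exists p; split.
- by move=> a; rewrite addr_ge0 ?mulr_ge0 ?subr_ge0.
- by rewrite -(eq_bigr _ (fun a _ => mulr1 (p a))) sum_p; ring.
- by rewrite sum_p.
Qed.
End MaxDifference.

Section Linearization.
Variables (R : realType) (nS nA m : nat).
Variables (Pt : 'I_nS -> 'I_nA -> 'I_nS -> R) (r : 'I_nS -> 'I_nA -> 'I_nS -> R)
  (gamma alpha : R) (Phi : 'M[R]_(nA * nS, m)) (d : 'I_nS -> 'I_nA -> R).

Lemma sa_colE (f : 'I_nS -> 'I_nA -> R) s a : sa_col f (sa_idx s a) 0 = f s a.
Proof. by rewrite /sa_col /sa_idx mxE mxvecE mxE. Qed.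

Lemma sum_sa (F : 'I_(nA * nS) -> R) :
  \sum_i F i = \sum_s \sum_a F (sa_idx s a).
Proof.
rewrite (reindex (uncurry (@mxvec_index nA nS))) /=; last exact: curry_mxvec_bij.
by rewrite exchange_big pair_bigA /=; apply: eq_bigr => -[a s].
Qed.

Lemma qvalE th s a : qval Phi th s a = (Phi *m th) (sa_idx s a) 0.
Proof. by rewrite /qval -row_mul mxE. Qed.

Lemma Pimat_mulE (mu : 'I_nS -> 'I_nA -> R) (v : 'cV[R]_(nA * nS)) s :
  (Pimat mu *m v) s 0 = \sum_a mu s a * v (sa_idx s a) 0.
Proof.
rewrite mxE sum_sa (bigD1 s) //= [X in _ + X]big1 ?addr0.
  by apply: eq_bigr => a _; rewrite mxE sa_colE eqxx.
by move=> s' ns'; apply: big1 => a _; rewrite mxE sa_colE (negbTE ns') mul0r.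
Qed.

Lemma exists_linearizing_policy (a0 : 'I_nA) th ths :
  exists mu, is_stoch_policy mu /\
    Vvec Phi th - Vvec Phi ths = Pimat mu *m (Phi *m (th - ths)).
Proof.
pose p s := cid (fmax_subr_convex (qval Phi th s) (qval Phi ths s) a0).
exists (fun s => sval (p s)); split; first by split=> s; case: (svalP (p s)).
apply/colP => s; rewrite Pimat_mulE !mxE; case: (p s) => /= q [_ _ ->].
by apply: eq_bigr => a _; rewrite !qvalE mulmxBr !mxE.
Qed.

Lemma gfun_subr th ths :
  gfun Pt r gamma Phi d th - gfun Pt r gamma Phi d ths =
  Phi^T *m Dmat d *m (gamma *: (Pmat Pt *m (Vvec Phi th - Vvec Phi ths)) - Phi *m (th - ths)).
Proof.
rewrite /gfun -mulmxBr; congr (_ *m _); rewrite !mulmxBr.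
by apply/matrixP => i j; rewrite !mxE; ring.
Qed.

Lemma gfun_linearize mu th ths :
  gfun Pt r gamma Phi d ths = 0 ->
  Vvec Phi th - Vvec Phi ths = Pimat mu *m (Phi *m (th - ths)) ->
  th - ths + alpha *: gfun Pt r gamma Phi d th = Amat Pt gamma alpha Phi d mu *m (th - ths).
Proof.
move=> g_ths hV.
have -> : gfun Pt r gamma Phi d th = gfun Pt r gamma Phi d th - gfun Pt r gamma Phi d ths.
  by rewrite g_ths subr0.
rewrite gfun_subr hV /Amat.
rewrite !mulmxDl mul1mx mulNmx -!scalemxAl mulmxBr -!mulmxA -!scalemxAr.
set u := Phi^T *m (Dmat d *m (Phi *m _)).
set v := Phi^T *m (Dmat d *m (Pmat Pt *m _)).
by apply/matrixP => i j; rewrite !mxE; ring.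
Qed.

Definition sample_law (x : 'I_nS * 'I_nA * 'I_nS) : R := d x.1.1 x.1.2 * Pt x.1.1 x.1.2 x.2.

Hypothesis Pt_sum1 : forall s a, \sum_s' Pt s a s' = 1.

Lemma sample_law_sum1 : \sum_s \sum_a d s a = 1 -> \sum_x sample_law x = 1.
Proof.
move=> <-; rewrite sum_triple; apply: eq_bigr => s _; apply: eq_bigr => a _.
by rewrite /sample_law /= -(@mulr_sumr R) Pt_sum1 mulr1.
Qed.

Lemma gfun_sample_mean th :
  gfun Pt r gamma Phi d th = \sum_x sample_law x *: ghat r gamma Phi x.1.1 x.1.2 x.2 th.
Proof.
apply/colP => j; rewrite summxE sum_triple.
rewrite /gfun /Dmat mul_mx_diag mxE sum_sa; apply: eq_bigr => s _.
apply: eq_bigr => a _; rewrite !mxE /sa_idx !mxvecE !mxE -/(sa_idx s a).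
have -> : \sum_j0 Phi (sa_idx s a) j0 * th j0 0 = qval Phi th s a by rewrite qvalE mxE.
under eq_bigr => s' _ do rewrite /Pmat mxE sa_colE mxE.
under [RHS]eq_bigr => s' _ do rewrite !mxE /=.
rewrite /Rexp; set q := qval Phi th s a; set ph := Phi (sa_idx s a) j.
transitivity (ph * d s a * \sum_s'
    (Pt s a s' * r s a s' + gamma * (Pt s a s' * Vth Phi th s') - Pt s a s' * q)).
  by rewrite !big_split /= sumrN -mulr_sumr -mulr_suml Pt_sum1 mul1r.
by rewrite mulr_sumr; apply: eq_bigr => s' _; rewrite /sample_law /=; ring.
Qed.

Lemma sample_mean_ghat_subr_gfun th : \sum_s \sum_a d s a = 1 ->
  \sum_x sample_law x *: (ghat r gamma Phi x.1.1 x.1.2 x.2 th - gfun Pt r gamma Phi d th) = 0.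
Proof.
move=> d_sum1; under eq_bigr do rewrite scalerBr.
by rewrite sumrB -scaler_suml sample_law_sum1 // scale1r -gfun_sample_mean subrr.
Qed.

End Linearization.

Section FiniteValuedIntegral.
Context d (T : measurableType d) (R : realType).
Variables (mu : {finite_measure set T -> \bar R}) (I : finType) (X : T -> I).
Hypothesis mX : forall i, measurable [set w | X w = i].

Let comp_indicE (f : I -> R) w : f (X w) = \sum_i f i * \1_[set w | X w = i] w.
Proof.
rewrite (bigD1 (X w)) //= indicE mem_set // mulr1 big1 ?addr0 // => i /negP ne.
by rewrite indicE memNset ?mulr0 // => Xi; apply: ne; rewrite /= Xi.
Qed.

Let integrable_scaled_indic (f : I -> R) i :
  mu.-integrable setT (fun w => ((f i)%:E * (\1_[set w | X w = i] w)%:E)%E).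
Proof. exact/(integrableZl measurableT)/integrable_indic. Qed.

Lemma integrable_comp_finite (f : I -> R) : mu.-integrable setT (fun w => (f (X w))%:E).
Proof.
apply: (eq_integrable measurableT (fun w => \sum_i (f i)%:E * (\1_[set w | X w = i] w)%:E)%E).
  by move=> w _; rewrite comp_indicE sumEFin.
by apply: (integrable_sum measurableT) => i _; exact: integrable_scaled_indic.
Qed.

Lemma integral_comp_finite (f : I -> R) :
  (\int[mu]_w (f (X w))%:E = \sum_i (f i)%:E * mu [set w | X w = i])%E.
Proof.
rewrite (eq_integral (fun w => \sum_i (f i)%:E * (\1_[set w | X w = i] w)%:E)%E);
  last by move=> w _; rewrite comp_indicE sumEFin.
rewrite (integral_sum measurableT (integrable_scaled_indic f)); apply: eq_bigr => i _.
by rewrite (integralZl measurableT) ?integral_indic ?setIT //; exact: integrable_indic.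
Qed.

End FiniteValuedIntegral.

Definition ffun_rcons (T : Type) k (h : {ffun 'I_k -> T}) (x : T) : {ffun 'I_k.+1 -> T} :=
  [ffun t => if unlift ord_max t is Some t' then h t' else x].

Lemma prod_ffun_rcons (R : comPzSemiRingType) (T : Type) k (F : T -> R) h x :
  \prod_(t < k.+1) F (@ffun_rcons T k h x t) = (\prod_(t < k) F (h t)) * F x.
Proof.
rewrite big_ord_recr /= !ffunE unlift_none; congr (_ * _); apply: eq_bigr => t _.
rewrite ffunE (_ : widen_ord _ t = lift ord_max t) ?liftK //.
by apply: val_inj; exact: esym (lift_max t).
Qed.

Section SampledIterates.
Variables (R : realType) (nS nA m : nat).
Variables (r : 'I_nS -> 'I_nA -> 'I_nS -> R) (gamma alpha : R) (Phi : 'M[R]_(nA * nS, m))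
  (theta0 : 'cV[R]_m).
Variables (Omega : Type) (st : nat -> Omega -> 'I_nS) (at_ : nat -> Omega -> 'I_nA)
  (st' : nat -> Omega -> 'I_nS).

Local Notation sample := ('I_nS * 'I_nA * 'I_nS)%type.

Definition sample_at k w : sample := (st k w, at_ k w, st' k w).

Fixpoint theta_of_hist k : {ffun 'I_k -> sample} -> 'cV[R]_m :=
  if k is k'.+1 then fun h =>
    let th := theta_of_hist [ffun t => h (widen_ord (leqnSn k') t)] in
    th + alpha *: ghat r gamma Phi (h ord_max).1.1 (h ord_max).1.2 (h ord_max).2 th
  else fun=> theta0.

Lemma theta_histE k w :
  theta r gamma alpha Phi theta0 st at_ st' k w = theta_of_hist (hist st at_ st' k w).
Proof.
elim: k => //= k ->.
have -> : [ffun t => hist st at_ st' k.+1 w (widen_ord (leqnSn k) t)] = hist st at_ st' k w.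
  by apply/ffunP => t; rewrite !ffunE.
by rewrite ffunE.
Qed.

Lemma F_measurable_hist k (f : {ffun 'I_k -> sample} -> R) :
  F_measurable st at_ st' k (fun w => f (hist st at_ st' k w)).
Proof. by move=> B _; exists (f @^-1` B). Qed.

Lemma hist_sample_fiberE k h x :
  [set w | (hist st at_ st' k w, sample_at k w) = (h, x)] =
  [set w | hist st at_ st' k.+1 w = ffun_rcons h x].
Proof.
apply/seteqP; split=> w /=.
  case=> <- <-; apply/ffunP => t; rewrite !ffunE.
  by case: unliftP => [t'|] -> ; rewrite ?ffunE // lift_max.
move/ffunP=> hw; congr pair; last by have := hw ord_max; rewrite !ffunE unlift_none.
by apply/ffunP => t; have := hw (lift ord_max t); rewrite !ffunE liftK lift_max.
Qed.

End SampledIterates.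

Section FreshSample.
Variables (R : realType) (nS nA : nat).
Variables (Pt : 'I_nS -> 'I_nA -> 'I_nS -> R) (d : 'I_nS -> 'I_nA -> R).
Variables (dO : measure_display) (Omega : measurableType dO) (PP : probability Omega R).
Variables (st : nat -> Omega -> 'I_nS) (at_ : nat -> Omega -> 'I_nA)
  (st' : nat -> Omega -> 'I_nS).
Hypotheses (mst : forall t i, measurable [set w | st t w = i])
  (mat : forall t i, measurable [set w | at_ t w = i])
  (mst' : forall t i, measurable [set w | st' t w = i]).
Hypothesis iid_law :
  forall (k : nat) (x : 'I_k -> 'I_nS) (y : 'I_k -> 'I_nA) (z : 'I_k -> 'I_nS),
  PP [set w | forall t : 'I_k, st t w = x t /\ at_ t w = y t /\ st' t w = z t]
  = (\prod_(t < k) (d (x t) (y t) * Pt (x t) (y t) (z t)))%:E.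

Local Notation sample := ('I_nS * 'I_nA * 'I_nS)%type.
Local Notation hist := (hist st at_ st').
Local Notation sample_at := (sample_at st at_ st').

Lemma hist_fiberE k (h : {ffun 'I_k -> sample}) :
  [set w | hist k w = h] =
  [set w | forall t : 'I_k, st t w = (h t).1.1 /\ at_ t w = (h t).1.2 /\ st' t w = (h t).2].
Proof.
apply/seteqP; split=> w /=; first by move=> <- t; rewrite ffunE.
move=> hw; apply/ffunP => t; rewrite ffunE.
by case: (hw t) => -> [-> ->]; case: (h t) => [[]].
Qed.

Lemma measurable_hist_fiber k h : measurable [set w | hist k w = h].
Proof.
rewrite hist_fiberE (_ : [set w | _] = \bigcap_(t in [set: 'I_k])
   ([set w | st t w = (h t).1.1] `&` ([set w | at_ t w = (h t).1.2] `&`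
    [set w | st' t w = (h t).2]))).
  by apply: fin_bigcap_measurable => [|t _]; [exact: finite_finset | do 2?apply: measurableI].
by apply/seteqP; split=> w /= hw t; [move=> _ | have := hw t I]; case: (hw t).
Qed.

Lemma hist_fiber_law k h :
  PP [set w | hist k w = h] = (\prod_(t < k) sample_law Pt d (h t))%:E.
Proof. by rewrite hist_fiberE iid_law. Qed.

Let measurable_hist_sample_fiber k (p : {ffun 'I_k -> sample} * sample) :
  measurable [set w | (hist k w, sample_at k w) = p].
Proof. by case: p => h x; rewrite hist_sample_fiberE; exact: measurable_hist_fiber. Qed.

Lemma integrable_hist_sample k (G : {ffun 'I_k -> sample} -> sample -> R) :
  PP.-integrable setT (fun w => (G (hist k w) (sample_at k w))%:E).
Proof.
exact: (integrable_comp_finite PP (@measurable_hist_sample_fiber k) (fun p => G p.1 p.2)).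
Qed.

Lemma integral_hist_sample_eq0 k (G : {ffun 'I_k -> sample} -> sample -> R) :
  (forall h, \sum_x sample_law Pt d x * G h x = 0) ->
  forall A, inF st at_ st' k A -> (\int[PP]_(w in A) (G (hist k w) (sample_at k w))%:E = 0)%E.
Proof.
move=> G_mean0 A [B ->].
pose F (p : {ffun 'I_k -> sample} * sample) := if `[< B p.1 >] then G p.1 p.2 else 0.
have patchF : (fun w => (G (hist k w) (sample_at k w))%:E) \_ [set w | B (hist k w)] =
    (fun w => (F (hist k w, sample_at k w))%:E).
  apply/funext => w; rewrite patchE /F /=.
  by case: ifPn => [/set_mem|/negP Bw]; [move/asboolT -> | rewrite asboolF //; move/mem_set].
rewrite integral_mkcond patchF integral_comp_finite; last exact: measurable_hist_sample_fiber.
transitivity ((\sum_h \sum_x F (h, x) * ((\prod_t sample_law Pt d (h t)) * sample_law Pt d x))%:E).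
  rewrite pair_bigA -sumEFin; apply: eq_bigr => -[h x] _.
  have := hist_fiber_law (ffun_rcons h x); rewrite prod_ffun_rcons => law.
  by rewrite hist_sample_fiberE EFinM -law.
rewrite big1 // => h _; rewrite /F /=; case: asboolP => _; last first.
  by rewrite big1 // => x _; rewrite mul0r.
under eq_bigr do rewrite mulrC -mulrA.
by rewrite -mulr_sumr G_mean0 mulr0.
Qed.

End FreshSample.

Unset Implicit Arguments.
Theorem proposition2
  (R : realType) (nS nA m : nat)
  (* MDP *)
  (Pt : 'I_nS -> 'I_nA -> 'I_nS -> R) (r : 'I_nS -> 'I_nA -> 'I_nS -> R)
  (gamma : R)
  (hP0 : forall s a s', 0 <= Pt s a s')
  (hP1 : forall s a, \sum_(s' < nS) Pt s a s' = 1)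
  (hgamma : 0 < gamma < 1)
  (* features *)
  (Phi : 'M[R]_(nA * nS, m)) (hPhi : \rank Phi = m)
  (* sampling distribution *)
  (d : 'I_nS -> 'I_nA -> R)
  (hd0 : forall s a, 0 < d s a)
  (hd1 : \sum_(s < nS) \sum_(a < nA) d s a = 1)
  (* step size *)
  (alpha : R) (halpha : 0 < alpha < 1)
  (* joint spectral radius < 1 *)
  (hjsr : jsr Pt gamma alpha Phi d < 1)
  (* projected Bellman fixed point *)
  (theta_star : 'cV[R]_m)
  (hstar : gfun Pt r gamma Phi d theta_star = 0)
  (* i.i.d. sampling on a probability space *)
  (dO : measure_display) (Omega : measurableType dO) (PP : probability Omega R)
  (theta0 : 'cV[R]_m)
  (st : nat -> Omega -> 'I_nS) (at_ : nat -> Omega -> 'I_nA)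
  (st' : nat -> Omega -> 'I_nS)
  (hst : forall t i, measurable [set w | st t w = i])
  (hat : forall t i, measurable [set w | at_ t w = i])
  (hst' : forall t i, measurable [set w | st' t w = i])
  (hlaw : forall (k : nat) (x : 'I_k -> 'I_nS) (y : 'I_k -> 'I_nA) (z : 'I_k -> 'I_nS),
      PP [set w | forall t : 'I_k, st t w = x t /\ at_ t w = y t /\ st' t w = z t]
      = (\prod_(t < k) (d (x t) (y t) * Pt (x t) (y t) (z t)))%:E) :
  let th := theta r gamma alpha Phi theta0 st at_ st' in
  let wk := fun (k : nat) (w : Omega) =>
      ghat r gamma Phi (st k w) (at_ k w) (st' k w) (th k w)
      - gfun Pt r gamma Phi d (th k w) in
  exists mu : nat -> Omega -> 'I_nS -> 'I_nA -> R,
    (forall k w, is_stoch_policy (mu k w)) /\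
    (forall k s a, F_measurable st at_ st' k (fun w => mu k w s a)) /\
    (forall k w, th k.+1 w - theta_star
                 = Amat Pt gamma alpha Phi d (mu k w) *m (th k w - theta_star)
                   + alpha *: wk k w) /\
    (forall k (j : 'I_m),
        PP.-integrable setT (fun w => (wk k w j 0)%:E) /\
        (forall A, inF st at_ st' k A ->
           (\int[PP]_(w in A) (wk k w j 0)%:E = 0)%E)).
Proof.
move=> th wk.
have nA_gt0 : (0 < nA)%N.
  by apply: (@ord_gt0_of_sum_neq0 _ _ (fun a => \sum_s d s a)); rewrite exchange_big hd1 oner_neq0.
pose policy (x : 'cV[R]_m) := cid (exists_linearizing_policy Phi (Ordinal nA_gt0) x theta_star).
pose thH k := @theta_of_hist _ _ _ _ r gamma alpha Phi theta0 k.
exists (fun k w => sval (policy (thH k (hist st at_ st' k w)))); split; [|split; [|split]].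
- by move=> k w; case: (svalP (policy (thH k (hist st at_ st' k w)))).
- by move=> k s a; exact: (F_measurable_hist _ _ _ (fun h => sval (policy (thH k h)) s a)).
- move=> k w; rewrite /wk /th /= theta_histE.
  case: (svalP (policy (thH k (hist st at_ st' k w)))) => _ /(gfun_linearize alpha hstar) <-.
  by rewrite scalerBr addrACA subrr addr0 addrAC.
- move=> k j.
  pose G h x := (ghat r gamma Phi x.1.1 x.1.2 x.2 (thH k h) - gfun Pt r gamma Phi d (thH k h)) j 0.
  have -> : (fun w => (wk k w j 0)%:E) =
      (fun w => (G (hist st at_ st' k w) (sample_at st at_ st' k w))%:E).
    by apply/funext => w; rewrite /wk /th theta_histE.
  split; first exact: integrable_hist_sample.
  apply: integral_hist_sample_eq0 => // h.
  have /matrixP/(_ j 0) := sample_mean_ghat_subr_gfun r gamma Phi hP1 (thH k h) hd1.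
  rewrite summxE [RHS]mxE => {2}<-.
  by apply: eq_bigr => x _; rewrite mxE.
Qed.
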